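(* Let $\mathscr Q_n$ be a non-singular quadric in $\mathrm{PG}(n,q)$ of projective index $g$ with point-graph $\Gamma$, let $0\le s<g$, and let $\alpha_s$ be an $s$-dimensional subspace contained in $\mathscr Q_n$. Then every vertex of $\mathcal Y_s$ is adjacent in $\Gamma$ to $0$, $\frac12|\mathcal X_s|$ or $|\mathcal X_s|$ vertices of $\mathcal X_s$ if and only if $q=2$.
   Context: A non-singular quadric $\mathscr Q_n$ in $\mathrm{PG}(n,q)$ is the point set of a non-degenerate quadric; its projective index $g$ is the largest dimension of a projective subspace contained in $\mathscr Q_n$. The point-graph $\Gamma$ has vertex set the points of $\mathscr Q_n$, two distinct points adjacent iff the line joining them is contained in $\mathscr Q_n$. A point $X$ of $\mathscr Q_n$ has type (i) if $X\in\alpha_s$; type (ii) if $X\notin\alpha_s$ and the $(s+1)$-space $\langle\alpha_s,X\rangle$ is contained in $\mathscr Q_n$; type (iii) otherwise. $\mathcal X_s$ is the set of type (ii) points and $\mathcal Y_s$ the set of points of type (i) or (iii). *)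

From HB Require Import structures.
From mathcomp Require Import all_boot all_order all_algebra.
Set Implicit Arguments. Unset Strict Implicit. Unset Printing Implicit Defensive.
Import GRing.Theory.
Local Open Scope ring_scope.

(* PG(n,q) over a finite field F (q = #|F|) is modelled on the vector space
   F^(n+1) of row vectors 'rV[F]_(n.+1).  Projective subspaces are row spaces
   of matrices 'M[F]_(n.+1) (mxalgebra); a projective subspace of projective
   dimension d is a row space of rank d+1.  Projective points are represented
   canonically by the rank-1 matrices U with <<U>> = U. *)

Section Quadric.
Variables (F : finFieldType) (n : nat).

(* The quadratic form Q(x) = x A x^T (every quadratic form in n+1 variables
   is of this shape for some, e.g. upper triangular, matrix A). *)
Definition qform (A : 'M[F]_(n.+1)) (x : 'rV[F]_(n.+1)) : F :=
  (x *m A *m x^T) 0 0.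

Definition polar (A : 'M[F]_(n.+1)) (x y : 'rV[F]_(n.+1)) : F :=
  qform A (x + y) - qform A x - qform A y.

Definition nonsingular (A : 'M[F]_(n.+1)) : Prop :=
  forall x : 'rV[F]_(n.+1),
    qform A x = 0 -> (forall y, polar A x y = 0) -> x = 0.

Definition on_quadric (A : 'M[F]_(n.+1)) (U : 'M[F]_(n.+1)) : bool :=
  [forall v : 'rV[F]_(n.+1), (v <= U)%MS ==> (qform A v == 0)].

Definition proj_points : {set 'M[F]_(n.+1)} :=
  [set U : 'M[F]_(n.+1) | (\rank U == 1)%N && (<<U>>%MS == U)].

Definition quadric_points (A : 'M[F]_(n.+1)) : {set 'M[F]_(n.+1)} :=
  [set X in proj_points | on_quadric A X ].

Definition adjacent (A : 'M[F]_(n.+1)) (X Y : 'M[F]_(n.+1)) : bool :=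
  (X != Y) && on_quadric A (X + Y)%MS.

Definition proj_index (A : 'M[F]_(n.+1)) (g : nat) : Prop :=
  (exists U : 'M[F]_(n.+1), \rank U = g.+1 /\ on_quadric A U) /\
  (forall U : 'M[F]_(n.+1), on_quadric A U -> (\rank U <= g.+1)%N).

Definition Xs (A alpha : 'M[F]_(n.+1)) : {set 'M[F]_(n.+1)} :=
  [set X in quadric_points A |
     ~~ (X <= alpha)%MS && on_quadric A (alpha + X)%MS ].

Definition Ys (A alpha : 'M[F]_(n.+1)) : {set 'M[F]_(n.+1)} :=
  quadric_points A :\: Xs A alpha.

Definition nbrs_in_Xs (A alpha Y : 'M[F]_(n.+1)) : nat :=
  #|[set X in Xs A alpha | adjacent A Y X ]|.

End Quadric.

From HB Require Import structures.
From mathcomp Require Import all_boot all_order all_algebra.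
From mathcomp Require Import ring zify.
Set Implicit Arguments. Unset Strict Implicit. Unset Printing Implicit Defensive.
Import GRing.Theory.
Local Open Scope ring_scope.

(* A point <x> of the quadric lies in X_s exactly when x is singular, lies
   outside alpha_s and is orthogonal to alpha_s for the polar form B.  A point
   Y of type (i) is collinear with all of X_s.  A point Y = <y> of type (iii)
   satisfies B(y, a) <> 0 for some a in alpha_s; correcting x by a multiple of
   a makes it orthogonal to y, so every point of X_s is <z + t a> for a unique
   neighbour <z> of Y in X_s and a unique t in F: |X_s| = q * #neighbours.
   This gives the values for q = 2.  Conversely, non-singularity provides a
   point of type (iii), and for a generator U the totally singular subspace
   alpha_s + (U meet alpha_s^perp) has dimension at least dim U > dim alpha_s,
   so X_s is nonempty and |X_s| = q c > 0 forces q = 2. *)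

Section PolarForm.
Variables (F : finFieldType) (n : nat) (A : 'M[F]_(n.+1)).
Local Notation V := 'rV[F]_(n.+1).
Local Notation Q := (qform A).
Local Notation B := (polar A).

Definition polarmx : 'M[F]_(n.+1) := A + A^T.

Lemma tr_polarmx : polarmx^T = polarmx.
Proof. by rewrite /polarmx linearD /= trmxK addrC. Qed.

Lemma polarE x y : B x y = (x *m polarmx *m y^T) 0 0.
Proof.
have swap : (y *m A *m x^T) 0 0 = (x *m A^T *m y^T) 0 0.
  have trE : (y *m A *m x^T)^T = x *m A^T *m y^T by rewrite !trmx_mul trmxK mulmxA.
  by rewrite -trE [RHS]mxE.
rewrite /polar /qform /polarmx linearD /= !(mulmxDl, mulmxDr).
set xx := x *m A *m x^T; set xy := x *m A *m y^T; set yy := y *m A *m y^T.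
set yx := y *m A *m x^T in swap *; set xty := x *m A^T *m y^T in swap *.
(* Opaque products, so that mxE only expands the sums. *)
clearbody xx xy yy yx xty; by rewrite !mxE swap; ring.
Qed.

Lemma qformD x y : Q (x + y) = Q x + Q y + B x y.
Proof. rewrite /polar; ring. Qed.

Lemma qformZ k x : Q (k *: x) = k ^+ 2 * Q x.
Proof. by rewrite /qform -!scalemxAl linearZ /= -scalemxAr !mxE mulrA. Qed.

Lemma polarxx x : B x x = 2 * Q x.
Proof. by rewrite /polar -mulr2n -scaler_nat qformZ; ring. Qed.

Lemma polarC x y : B x y = B y x.
Proof.
have trE : (y *m polarmx *m x^T)^T = x *m polarmx *m y^T.
  by rewrite !trmx_mul trmxK tr_polarmx mulmxA.
by rewrite !polarE -trE [LHS]mxE.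
Qed.

Lemma polarDl x y z : B (x + y) z = B x z + B y z.
Proof. by rewrite !polarE !mulmxDl mxE. Qed.

Lemma polarZl k x y : B (k *: x) y = k * B x y.
Proof. by rewrite !polarE -!scalemxAl mxE. Qed.

Lemma polarDr x y z : B x (y + z) = B x y + B x z.
Proof. by rewrite polarC polarDl !(polarC x). Qed.

Lemma polarZr k x y : B x (k *: y) = k * B x y.
Proof. by rewrite polarC polarZl polarC. Qed.

Lemma polar0r x : B x 0 = 0.
Proof. by rewrite -(scale0r 0) polarZr mul0r. Qed.

Definition perpmx m (U : 'M[F]_(m, n.+1)) := kermx (polarmx *m U^T).

Lemma sub_perpmxP m (U : 'M[F]_(m, n.+1)) (v : V) :
  reflect (forall u, (u <= U)%MS -> B v u = 0) (v <= perpmx U)%MS.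
Proof.
apply: (iffP sub_kermxP) => [vU0 u /submxP[D ->]|vU0].
  by rewrite polarE trmx_mul !mulmxA -(mulmxA v) vU0 mul0mx mxE.
apply/matrixP => i j; rewrite (ord1 i) [RHS]mxE -(vU0 _ (row_sub j U)).
by rewrite polarE mulmxA !mxE; apply: eq_bigr => k _; rewrite !mxE.
Qed.

Lemma mxrank_perpmx m p (U : 'M[F]_(m, n.+1)) (W : 'M[F]_(p, n.+1)) :
  (\rank (U :&: perpmx W) + \rank W = \rank (W :&: perpmx U) + \rank U)%N.
Proof.
rewrite -(mxrank_mul_ker U (polarmx *m W^T)) -(mxrank_mul_ker W (polarmx *m U^T)).
rewrite -[\rank (W *m _)]mxrank_tr !trmx_mul trmxK tr_polarmx !mulmxA /perpmx.
by rewrite [LHS]addnCA [RHS]addnCA; congr (_ + _); apply: addnC.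
Qed.

Lemma on_quadricP (U : 'M[F]_(n.+1)) :
  reflect (forall v : V, (v <= U)%MS -> Q v = 0) (on_quadric A U).
Proof.
apply: (iffP forallP) => [qU v vU|qU v]; first exact/eqP/(implyP (qU v)).
by apply/implyP => /qU ->.
Qed.

Lemma on_quadric_sub (U W : 'M[F]_(n.+1)) :
  (U <= W)%MS -> on_quadric A W -> on_quadric A U.
Proof.
by move=> sUW /on_quadricP qW; apply/on_quadricP => v /submx_trans/(_ sUW)/qW.
Qed.

Lemma on_quadric_polar (U : 'M[F]_(n.+1)) u v : on_quadric A U ->
  (u <= U)%MS -> (v <= U)%MS -> B u v = 0.
Proof.
move=> /on_quadricP qU uU vU; have := qformD u v.
by rewrite qU ?addmx_sub // qU // qU // !add0r.
Qed.

Lemma on_quadric_perpmx (U : 'M[F]_(n.+1)) : on_quadric A U -> (U <= perpmx U)%MS.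
Proof.
move=> qU; apply/row_subP => i; apply/sub_perpmxP => u uU.
exact: on_quadric_polar qU (row_sub i U) uU.
Qed.

Lemma on_quadric_adds (U W : 'M[F]_(n.+1)) :
  on_quadric A U -> on_quadric A W -> (W <= perpmx U)%MS ->
  on_quadric A (U + W)%MS.
Proof.
move=> /on_quadricP qU /on_quadricP qW sWU; apply/on_quadricP => v.
case/sub_addsmxP=> [[D E] /= ->]; have wW : (E *m W <= W)%MS by apply: submxMl.
rewrite qformD qU ?submxMl // qW // polarC.
by rewrite (sub_perpmxP _ _ (submx_trans wW sWU)) ?submxMl ?addr0.
Qed.

Lemma on_quadric_genmx (v : V) : Q v = 0 -> on_quadric A <<v>>%MS.
Proof.
move=> qv; apply/on_quadricP => u; rewrite genmxE => /sub_rVP[k ->].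
by rewrite qformZ qv mulr0.
Qed.

Lemma mxrank_adds_cap_perpmx (U W : 'M[F]_(n.+1)) : on_quadric A U ->
  (\rank U <= \rank (W + (U :&: perpmx W)))%N.
Proof.
move=> qU; set K := (U :&: perpmx W)%MS.
have capWK : (\rank (W :&: K) <= \rank (W :&: perpmx U))%N.
  apply/mxrankS/capmxS => //; exact: submx_trans (capmxSl _ _) (on_quadric_perpmx qU).
have := mxrank_sum_cap W K; have := mxrank_perpmx U W; rewrite -/K; lia.
Qed.

End PolarForm.

Section Points.
Variables (F : finFieldType) (n : nat) (A : 'M[F]_(n.+1)).
Local Notation V := 'rV[F]_(n.+1).
Local Notation Q := (qform A).
Local Notation B := (polar A).

Definition ptvec (X : 'M[F]_(n.+1)) : V :=
  odflt 0 [pick v : V | (v != 0) && (v <= X)%MS].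

Lemma proj_pointP X : X \in proj_points F n -> ptvec X != 0 /\ <<ptvec X>>%MS = X.
Proof.
rewrite inE => /andP[/eqP rX /eqP gX].
have [v vX v0] : exists2 v : V, (v <= X)%MS & v != 0.
  by apply/rowV0Pn; rewrite -mxrank_eq0 rX.
rewrite /ptvec; case: pickP => [w /andP[w0 wX]|/(_ v)]; last by rewrite v0 vX.
split=> //=; rewrite -gX; apply/eq_genmx/eqmxP.
by rewrite -(mxrank_leqif_eq wX).2 rX rank_rV w0.
Qed.

Lemma genmx_proj_point (v : V) : v != 0 -> <<v>>%MS \in proj_points F n.
Proof. by move=> v0; rewrite inE genmx_id eqxx andbT genmxE rank_rV v0. Qed.

Lemma ptvec_genmx (v : V) : v != 0 -> exists2 k, k != 0 & ptvec <<v>>%MS = k *: v.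
Proof.
move=> v0; have [p0 pv] := proj_pointP (genmx_proj_point v0).
have [k pk] : exists k, ptvec <<v>>%MS = k *: v.
  by apply/sub_rVP; rewrite -genmxE pv genmxE submx_refl.
by exists k => //; apply: contraNneq p0 => k0; rewrite pk k0 scale0r.
Qed.

Lemma quadric_pointP X : X \in quadric_points A ->
  [/\ X \in proj_points F n, ptvec X != 0, <<ptvec X>>%MS = X & Q (ptvec X) = 0].
Proof.
rewrite inE => /andP[pX /on_quadricP qX]; have [p0 pX'] := proj_pointP pX.
by split=> //; apply: qX; rewrite -{2}pX' genmxE.
Qed.

Lemma genmx_quadric_point (v : V) : v != 0 -> Q v = 0 ->
  <<v>>%MS \in quadric_points A.
Proof. by move=> v0 qv; rewrite inE genmx_proj_point // on_quadric_genmx. Qed.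

Lemma on_quadric_adds_ptE X Y : X \in quadric_points A -> Y \in quadric_points A ->
  on_quadric A (X + Y)%MS = (B (ptvec X) (ptvec Y) == 0).
Proof.
case/quadric_pointP=> _ _ gX qx; case/quadric_pointP=> _ _ gY qy.
rewrite -{1}gX -{1}gY; apply/idP/eqP => [qXY|xy0].
  by apply: (on_quadric_polar qXY); [apply: submx_trans _ (addsmxSl _ _)|
    apply: submx_trans _ (addsmxSr _ _)]; rewrite genmxE.
apply: (on_quadric_adds (on_quadric_genmx qx) (on_quadric_genmx qy)).
by rewrite genmxE; apply/sub_perpmxP => u; rewrite genmxE => /sub_rVP[k ->];
  rewrite polarZr polarC xy0 mulr0.
Qed.

End Points.

Section TypeTwoPoints.
Variables (F : finFieldType) (n : nat) (A alpha : 'M[F]_(n.+1)).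
Local Notation V := 'rV[F]_(n.+1).
Local Notation Q := (qform A).
Local Notation B := (polar A).
Hypothesis qalpha : on_quadric A alpha.

Definition Xs_vector (w : V) : Prop :=
  [/\ Q w = 0, ~~ (w <= alpha)%MS & (w <= perpmx A alpha)%MS].

Lemma Xs_vector_neq0 w : Xs_vector w -> w != 0.
Proof. by case=> _ nwa _; apply: contraNneq nwa => ->; rewrite sub0mx. Qed.

Lemma genmx_Xs w : Xs_vector w -> <<w>>%MS \in Xs A alpha.
Proof.
move=> wX; have [qw nwa wp] := wX.
rewrite inE genmx_quadric_point ?Xs_vector_neq0 // genmxE nwa /=.
by apply: on_quadric_adds; rewrite ?on_quadric_genmx ?genmxE.
Qed.

Lemma Xs_quadric_point X : X \in Xs A alpha -> X \in quadric_points A.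
Proof. by rewrite inE => /andP[]. Qed.

Lemma ptvec_Xs X : X \in Xs A alpha -> Xs_vector (ptvec X).
Proof.
rewrite inE => /and3P[/quadric_pointP[_ _ gX qx] nXa qaX].
split=> //; first by move: nXa; rewrite -{1}gX genmxE.
apply/sub_perpmxP => u ua; apply: (on_quadric_polar qaX).
  by apply: submx_trans _ (addsmxSr _ _); rewrite -{2}gX genmxE.
exact: submx_trans ua (addsmxSl _ _).
Qed.

Lemma Xs_vector_shift x a t : Xs_vector x -> (a <= alpha)%MS ->
  Xs_vector (x + t *: a).
Proof.
case=> qx nxa xp aa; have ap := submx_trans aa (on_quadric_perpmx qalpha).
split; last exact: addmx_sub xp (scalemx_sub _ ap).
  move/on_quadricP: qalpha => /(_ a aa) qa.
  by rewrite qformD qformZ polarZr (sub_perpmxP _ _ _ xp a aa) qa qx !mulr0 !addr0.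
apply: contra nxa => xta.
by rewrite -[x](addrK (t *: a)) addmx_sub // -scaleNr scalemx_sub.
Qed.

Lemma nbrs_in_Xs_sub Y : (Y <= alpha)%MS ->
  nbrs_in_Xs A alpha Y = #|Xs A alpha|.
Proof.
move=> Ya; apply: eq_card => X; rewrite inE.
case XX: (X \in Xs A alpha) => //=; move: XX; rewrite inE => /and3P[_ nXa qaX].
rewrite /adjacent (on_quadric_sub _ qaX) ?addsmxS ?andbT //.
by apply: contraNneq nXa => <-.
Qed.

Lemma Ys_sub_or_polar Y : Y \in Ys A alpha ->
  (Y <= alpha)%MS \/ exists2 a, (a <= alpha)%MS & B (ptvec Y) a != 0.
Proof.
rewrite inE => /andP[nY qY]; have [_ _ gY qy] := quadric_pointP qY.
case: (boolP [exists a : V, (a <= alpha)%MS && (B (ptvec Y) a != 0)]).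
  by case/existsP=> a /andP[aa ya]; right; exists a.
move/existsPn=> yp; left; apply: contraNT nY => nYa.
rewrite inE qY nYa -{1}gY /=; apply: on_quadric_adds; rewrite ?on_quadric_genmx //.
by rewrite genmxE; apply/sub_perpmxP => a aa; apply/eqP/negPn; move: (yp a); rewrite aa.
Qed.

End TypeTwoPoints.

Section TypeThreeCount.
Variables (F : finFieldType) (n : nat) (A alpha Y : 'M[F]_(n.+1)) (a : 'rV[F]_(n.+1)).
Local Notation B := (polar A).
Local Notation y := (ptvec Y).
Hypothesis qalpha : on_quadric A alpha.
Hypothesis qY : Y \in quadric_points A.
Hypothesis aalpha : (a <= alpha)%MS.
Hypothesis ya : B y a != 0.

Let N := [set X in Xs A alpha | adjacent A Y X].

Lemma notin_Xs_polar : Y \notin Xs A alpha.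
Proof. by apply: contra ya => /ptvec_Xs[_ _ /sub_perpmxP/(_ a aalpha) ->]. Qed.

Lemma mem_nbrs_polar X : (X \in N) = (X \in Xs A alpha) && (B y (ptvec X) == 0).
Proof.
rewrite inE /adjacent; case XX: (X \in Xs A alpha) => //=.
rewrite (on_quadric_adds_ptE qY (Xs_quadric_point XX)) andb_idl //.
by move=> _; apply: contraNneq notin_Xs_polar => ->.
Qed.

Definition shift_pt (p : 'M[F]_(n.+1) * F) := <<ptvec p.1 + p.2 *: a>>%MS.

Lemma Xs_imset_shift_pt : Xs A alpha = shift_pt @: setX N setT.
Proof.
apply/setP => X; apply/idP/imsetP => [XX|[[Z t] /setXP[ZN _] ->]]; last first.
  by rewrite mem_nbrs_polar in ZN; case/andP: ZN => /ptvec_Xs ZX _;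
    apply/genmx_Xs/Xs_vector_shift.
have [_ _ gX _] := quadric_pointP (Xs_quadric_point XX).
set x := ptvec X in gX; set c := B y x / B y a.
have wX := Xs_vector_shift qalpha (- c) (ptvec_Xs XX) aalpha.
have [k k0 pk] := ptvec_genmx (Xs_vector_neq0 wX).
have yw : B y (x + - c *: a) = 0 by rewrite polarDr polarZr mulNr divfK // subrr.
exists (<<x + - c *: a>>%MS, k * c).
  by rewrite inE mem_nbrs_polar genmx_Xs //= pk polarZr yw mulr0 eqxx inE.
rewrite /shift_pt /= pk scalerDr scalerA -addrA -scalerDl mulrN addNr scale0r addr0.
by rewrite (eq_genmx (eqmx_scale _ k0)) -/x gX.
Qed.

Lemma shift_pt_inj : {in setX N setT &, injective shift_pt}.
Proof.
move=> [Z t] [Z' t'] /setXP[+ _] /setXP[+ _]; rewrite !mem_nbrs_polar.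
case/andP=> /Xs_quadric_point/quadric_pointP[_ z0 gZ _] /eqP yz.
case/andP=> /Xs_quadric_point/quadric_pointP[_ z'0 gZ' _] /eqP yz'.
rewrite /shift_pt /=; set z := ptvec Z in z0 gZ yz *.
set z' := ptvec Z' in z'0 gZ' yz' * => E.
have [k Ek] : exists k, z + t *: a = k *: (z' + t' *: a).
  by apply/sub_rVP; rewrite -genmxE E genmxE submx_refl.
have tk : t = k * t'.
  move/(congr1 (B y)): Ek; rewrite polarZr !polarDr !polarZr yz yz' !add0r mulrA.
  exact: mulIf.
have zk : z = k *: z' by move: Ek; rewrite scalerDr scalerA -tk => /addIr.
have ZZ' : Z = Z'.
  have k0 : k != 0 by apply: contraNneq z0 => k0; rewrite zk k0 scale0r.
  by rewrite -gZ -gZ' zk; apply: eq_genmx; exact: eqmx_scale.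
have : (k - 1) *: z' = 0 by rewrite scalerBl scale1r -zk /z ZZ' subrr.
move/eqP; rewrite scaler_eq0 subr_eq0 (negbTE z'0) orbF => /eqP k1.
by rewrite ZZ' tk k1 mul1r.
Qed.

Lemma card_Xs_polar : #|Xs A alpha| = (nbrs_in_Xs A alpha Y * #|F|)%N.
Proof.
by rewrite Xs_imset_shift_pt card_in_imset ?cardsX ?cardsT //; exact: shift_pt_inj.
Qed.

End TypeThreeCount.

Lemma exists_polar_singular (F : finFieldType) (n : nat) (A : 'M[F]_(n.+1))
    (a : 'rV[F]_(n.+1)) :
  nonsingular A -> a != 0 -> qform A a = 0 ->
  exists2 y, qform A y = 0 & polar A a y != 0.
Proof.
move=> nsA a0 qa.
have [z az] : exists z, polar A a z != 0.
  apply/existsP; apply: contraNT a0 => /existsPn az0.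
  by apply/eqP/nsA => // z; apply/eqP/negPn/az0.
set t := - qform A z / polar A a z.
exists (z + t *: a).
  rewrite qformD qformZ qa mulr0 addr0 polarZr polarC.
  by rewrite /t divfK // subrr.
by rewrite polarDr polarZr polarxx qa !mulr0 addr0.
Qed.

Lemma Xs_nonempty (F : finFieldType) (n : nat) (A alpha : 'M[F]_(n.+1)) (g : nat) :
  proj_index A g -> (\rank alpha <= g)%N -> on_quadric A alpha ->
  exists X, X \in Xs A alpha.
Proof.
move=> [[U [rU qU]] _] ra qa.
set W := (alpha + (U :&: perpmx A alpha))%MS.
have qW : on_quadric A W.
  by apply: on_quadric_adds; rewrite ?capmxSr // (on_quadric_sub (capmxSl _ _) qU).
have Wp : (W <= perpmx A alpha)%MS by rewrite addsmx_sub on_quadric_perpmx ?capmxSr.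
have /row_subPn[i nWi] : ~~ (W <= alpha)%MS.
  apply/negP => /mxrankS; have := mxrank_adds_cap_perpmx alpha qU; rewrite -/W; lia.
exists <<row i W>>%MS; apply: (genmx_Xs qa); split=> //.
  by move/on_quadricP: qW; apply; apply: row_sub.
exact: submx_trans (row_sub i W) Wp.
Qed.

Lemma exists_Ys_polar (F : finFieldType) (n : nat) (A alpha : 'M[F]_(n.+1)) :
  nonsingular A -> alpha != 0 -> on_quadric A alpha ->
  exists2 Y, Y \in Ys A alpha & #|Xs A alpha| = (nbrs_in_Xs A alpha Y * #|F|)%N.
Proof.
move=> nsA alpha0 qalpha; have [a aalpha a0] := rowV0Pn alpha0.
have qa : qform A a = 0 by move/on_quadricP: qalpha; apply.
have [z qz az] := exists_polar_singular nsA a0 qa.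
have z0 : z != 0 by apply: contraNneq az => ->; rewrite polar0r.
have qZ := genmx_quadric_point z0 qz; have [k k0 pk] := ptvec_genmx z0.
have za : polar A (ptvec <<z>>%MS) a != 0 by rewrite pk polarZl polarC mulf_neq0.
exists <<z>>%MS; last exact: card_Xs_polar qalpha qZ aalpha za.
by rewrite inE (notin_Xs_polar aalpha za).
Qed.

Lemma nbrs_in_Xs_Ys (F : finFieldType) (n : nat) (A alpha Y : 'M[F]_(n.+1)) :
  on_quadric A alpha -> Y \in Ys A alpha ->
  nbrs_in_Xs A alpha Y = #|Xs A alpha| \/
  #|Xs A alpha| = (nbrs_in_Xs A alpha Y * #|F|)%N.
Proof.
move=> qalpha YY; have qY : Y \in quadric_points A by move: YY; rewrite inE => /andP[].
case: (Ys_sub_or_polar qalpha YY) => [Ya|[a aalpha ya]].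
  by left; apply: nbrs_in_Xs_sub.
by right; apply: card_Xs_polar qalpha qY aalpha ya.
Qed.

Theorem lemma4p3 (F : finFieldType) (n : nat) (A : 'M[F]_(n.+1))
    (g s : nat) (alpha : 'M[F]_(n.+1)) :
  nonsingular A ->
  proj_index A g ->
  (s < g)%N ->
  \rank alpha = s.+1 ->
  on_quadric A alpha ->
  (forall Y, Y \in Ys A alpha ->
     [\/ nbrs_in_Xs A alpha Y = 0%N,
         (2 * nbrs_in_Xs A alpha Y)%N = #|Xs A alpha|
       | nbrs_in_Xs A alpha Y = #|Xs A alpha| ])
  <-> #|F| = 2%N.
Proof.
move=> nsA gA sg ra qalpha; split=> [nbrsP|F2 Y /(nbrs_in_Xs_Ys qalpha)[->|->]].
- have alpha0 : alpha != 0 by rewrite -mxrank_eq0 ra.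
  have [Y YY cardXs] := exists_Ys_polar nsA alpha0 qalpha.
  have [X XX] : exists X, X \in Xs A alpha by apply: Xs_nonempty gA _ qalpha; rewrite ra.
  have Xs_gt0 : (0 < #|Xs A alpha|)%N by apply/card_gt0P; exists X.
  have F_gt1 : (1 < #|F|)%N := card_finNzRing_gt1 F.
  case: (nbrsP Y YY); move: Xs_gt0 F_gt1; rewrite cardXs; nia.
- exact: Or33.
- by apply: Or32; rewrite F2 mulnC.
Qed.
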